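(* For every integer $p\geq 2$ and $d\geq 3$ there exists a finite group $\Gamma$ and a subset $D=\{\gamma_1,\ldots,\gamma_d\}\subseteq\Gamma$ with $|D|=d$ such that $(\Gamma,D)$ satisfies condition $\mathcal{G}(p)$.
   Context: For $p\geq 1$, the pair $(\Gamma,D)$ (with $\Gamma$ having identity $e$) satisfies condition $\mathcal{R}(p)$ if for every sequence of indices $i_0,\ldots,i_{2p-1}\in\{1,\ldots,d\}$ the equality $\gamma_{i_0}\gamma_{i_1}^{-1}\gamma_{i_2}\gamma_{i_3}^{-1}\cdots\gamma_{i_{2p-2}}\gamma_{i_{2p-1}}^{-1}=e$ implies $i_l=i_{l+1}$ for some $l\in\{0,\ldots,2p-1\}$ (indices modulo $2p$). It satisfies $\mathcal{G}(p)$ if it satisfies $\mathcal{R}(1),\ldots,\mathcal{R}(p)$. *)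

From mathcomp Require Import all_boot all_fingroup.
Set Implicit Arguments. Unset Strict Implicit. Unset Printing Implicit Defensive.
Local Open Scope group_scope.

Definition alt_word (gT : finGroupType) (d : nat) (gam : 'I_d -> gT)
  (p : nat) (i : nat -> 'I_d) : gT :=
  foldr (fun k acc => gam (i k.*2) * (gam (i k.*2.+1))^-1 * acc) 1 (iota 0 p).

Definition cond_R (gT : finGroupType) (d : nat) (gam : 'I_d -> gT) (p : nat) : Prop :=
  forall i : nat -> 'I_d,
    alt_word gam p i = 1 ->
    exists l, l < p.*2 /\ i l = i ((l.+1) %% p.*2).

Definition cond_G (gT : finGroupType) (d : nat) (gam : 'I_d -> gT) (p : nat) : Prop :=
  forall q, 1 <= q <= p -> cond_R gam q.

From mathcomp Require Import all_boot all_fingroup.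
Set Implicit Arguments. Unset Strict Implicit. Unset Printing Implicit Defensive.

(* Let letter j act on reduced words (no two equal adjacent letters) of length
   at most 2p over 'I_d by prepending j, or by deleting it when the word starts
   with j.  This is an involution, so an alternating word of R(q) acts as the
   plain product of its 2q letters.  If no two consecutive indices agree, that
   product sends the empty word to the reduced word of length 2q <= 2p, so it
   is not the identity. *)

Local Open Scope group_scope.

Lemma alt_word_involutive (gT : finGroupType) d (gam : 'I_d -> gT) p i :
  (forall j, (gam j)^-1 = gam j) ->
  alt_word gam p i = \prod_(k <- iota 0 p.*2) gam (i k).
Proof.
move=> gamV; rewrite /alt_word.
suff shifted m : foldr (fun k w => gam (i k.*2) * (gam (i k.*2.+1))^-1 * w) 1
    (iota m p) = \prod_(k <- iota m.*2 p.*2) gam (i k) by apply: shifted 0.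
elim: p m => [|p IHp] m; first by rewrite big_nil.
by rewrite /= IHp doubleS /= !big_cons gamV mulgA.
Qed.

Section ReducedWords.
Variables (d n : nat).

Definition reduced (s : seq 'I_d) : bool := sorted [rel a b | a != b] s.

Lemma reduced_cons x s : reduced (x :: s) = (ohead s != Some x) && reduced s.
Proof. by case: s => //= y s; rewrite [Some y == _]eq_sym. Qed.

Lemma reduced_catr s t : reduced (s ++ t) -> reduced t.
Proof. by case/cat_sorted2. Qed.

Lemma reduced_rev s : reduced (rev s) = reduced s.
Proof.
rewrite /reduced rev_sorted; case: s => //= x s.
by apply: eq_path => a b; rewrite eq_sym.
Qed.

Lemma reduced_map_iota (i : nat -> 'I_d) m :
  (forall k, k.+1 < m -> i k != i k.+1) -> reduced (map i (iota 0 m)).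
Proof.
move=> neq_i; apply/(sortedP (i 0)) => k; rewrite size_map size_iota => lt_k1m.
have lt_km := ltnW lt_k1m.
by rewrite !(nth_map 0) ?nth_iota ?size_iota // !add0n; apply: neq_i.
Qed.

(* Words that are not reduced are fixed, so [toggle j] is an involution on all
   sequences of length at most n. *)
Definition toggle (j : 'I_d) (s : seq 'I_d) : seq 'I_d :=
  if ~~ reduced s then s
  else if ohead s == Some j then behead s
  else if size s < n then j :: s else s.

Lemma toggle_push j s : reduced (j :: s) -> size s < n -> toggle j s = j :: s.
Proof. by rewrite reduced_cons /toggle => /andP[/negbTE-> ->] ->. Qed.

Lemma toggle_pop j s : reduced (j :: s) -> toggle j (j :: s) = s.
Proof. by rewrite /toggle => ->; rewrite /= eqxx. Qed.

Lemma size_toggle j s : size s <= n -> size (toggle j s) <= n.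
Proof.
rewrite /toggle => le_sn; case: ifP => // _; case: ifP => [_|_].
  by rewrite size_behead (leq_trans (leq_pred _) le_sn).
by case: ifP.
Qed.

Lemma toggle_fixed j s :
  (reduced s -> (ohead s != Some j) && (n <= size s)) -> toggle j s = s.
Proof.
rewrite /toggle; case: (reduced s) => // /(_ isT) /andP[/negPf-> le_ns].
by rewrite ltnNge le_ns.
Qed.

Lemma toggleK j s : size s <= n -> toggle j (toggle j s) = s.
Proof.
move=> le_sn; have [red_s|nred_s] := boolP (reduced s); last first.
  by rewrite !toggle_fixed // => /(negP nred_s).
have [head_s|head_s] := eqVneq (ohead s) (Some j).
  case: s le_sn red_s head_s => // x s le_sn red_xs [<-].
  rewrite toggle_pop // toggle_push //; exact: leq_trans le_sn.
have [lt_sn|le_ns] := ltnP (size s) n.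
  have red_js : reduced (j :: s) by rewrite reduced_cons head_s.
  by rewrite (toggle_push red_js lt_sn) toggle_pop.
by rewrite !toggle_fixed // head_s le_ns.
Qed.

Definition toggle_bseq j (s : n.-bseq 'I_d) : n.-bseq 'I_d :=
  Bseq (size_toggle j (size_bseq s)).

Lemma toggle_bseqK j : involutive (toggle_bseq j).
Proof. by move=> s; apply: val_inj; rewrite /= toggleK ?size_bseq. Qed.

Definition letter_perm j : {perm n.-bseq 'I_d} := perm (inv_inj (toggle_bseqK j)).

Lemma letter_permE j s : val (letter_perm j s) = toggle j s.
Proof. by rewrite permE. Qed.

Lemma letter_permV j : (letter_perm j)^-1 = letter_perm j.
Proof.
apply/eqP; rewrite eq_invg_mul; apply/eqP/permP => s.
by rewrite permM perm1; apply: val_inj; rewrite !letter_permE toggleK ?size_bseq.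
Qed.

Lemma letter_perm_inj : 0 < n -> injective letter_perm.
Proof.
move=> n_gt0 j k eq_jk.
have := congr1 val (congr1 (fun g : {perm _} => g [bseq]) eq_jk).
by rewrite !letter_permE /= !toggle_push // => -[].
Qed.

Lemma prod_letter_perm l (s : n.-bseq 'I_d) :
  reduced (catrev l s) -> size (catrev l s) <= n ->
  val ((\prod_(j <- l) letter_perm j) s) = catrev l s.
Proof.
elim: l s => [|j l IHl] s red_ls le_ls_n; first by rewrite big_nil perm1.
rewrite /= catrevE in red_ls le_ls_n.
have push_j : val (letter_perm j s) = j :: s.
  rewrite letter_permE toggle_push //; first exact: reduced_catr red_ls.
  by apply: leq_trans le_ls_n; rewrite size_cat /= leq_addl.
by rewrite big_cons permM IHl push_j // catrevE.
Qed.

Lemma letter_perm_cond_R q : 0 < q -> q.*2 <= n -> cond_R letter_perm q.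
Proof.
move=> q_gt0 le_qn i word1.
have [/existsP[l /eqP eq_l]|/existsPn neq_i] :=
  boolP [exists l : 'I_q.*2, i l == i (l.+1 %% q.*2)].
  by exists l; split.
exfalso; pose L := map i (iota 0 q.*2).
have size_L : size L = q.*2 by rewrite size_map size_iota.
have red_L : reduced L.
  apply: reduced_map_iota => k lt_k1q; have := neq_i (Ordinal (ltnW lt_k1q)).
  by rewrite /= modn_small.
have prod_L1 : \prod_(j <- L) letter_perm j = 1.
  by rewrite big_map -alt_word_involutive ?word1 //; exact: letter_permV.
have := prod_letter_perm (l := L) (s := [bseq]).
rewrite prod_L1 perm1 catrevE cats0 reduced_rev size_rev size_L.
move=> /(_ red_L le_qn) /(congr1 size); rewrite size_rev size_L /=.
by move=> /esym/eqP; rewrite double_eq0 eqn0Ngt q_gt0.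
Qed.

End ReducedWords.

(* The construction works for every d. *)
Theorem proposition5p4 (p d : nat) :
  2 <= p -> 3 <= d ->
  exists (gT : finGroupType) (gam : 'I_d -> gT),
    injective gam /\ cond_G gam p.
Proof.
move=> p_ge2 _; have p_gt0 : 0 < p by apply: leq_trans p_ge2.
exists {perm p.*2.-bseq 'I_d}, (@letter_perm d p.*2); split.
  by apply: letter_perm_inj; rewrite double_gt0.
by move=> q /andP[q_gt0 le_qp]; apply: letter_perm_cond_R; rewrite ?leq_double.
Qed.
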